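(* For every integer $n\ge 5$, every $0<r<1/2$, and every convex $n$-gon $K$, we have $$\frac{\Delta(K_r)}{\Delta(K)}\ge 1-2r.$$
   Context: Let $K=A_1A_2\ldots A_n$ be a convex polygon with vertices listed counterclockwise, indices taken modulo $n$. For fixed $0<r\le 1$, let $B_k$ be the point on the edge $A_{k+1}A_{k+2}$ with $A_{k+1}B_k/A_{k+1}A_{k+2}=r$, and let $K_r$ be the $n$-gon bounded by the segments $A_kB_k$, $k=1,\ldots,n$. $\Delta(\cdot)$ denotes area. *)

From HB Require Import structures.
From mathcomp Require Import all_boot all_order all_algebra.
Set Implicit Arguments. Unset Strict Implicit. Unset Printing Implicit Defensive.
Import Order.TTheory GRing.Theory Num.Theory.
Local Open Scope ring_scope.

(* Planar geometry over a real field R; points are pairs (x, y).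
   A polygon A_1 ... A_n is given by the sequence s of its vertices (n = size s),
   indices taken modulo n (0-based here). *)

Section Poly.
Variable R : realFieldType.
Notation pt := (R * R)%type.

Definition vtx (s : seq pt) (k : nat) : pt := nth (0, 0) s (k %% size s).

Definition det2 (u v : pt) : R := u.1 * v.2 - u.2 * v.1.
Definition vsub (p q : pt) : pt := (p.1 - q.1, p.2 - q.2).

(* orientation: > 0 iff c lies strictly to the left of the directed line a -> b *)
Definition orient (a b c : pt) : R := det2 (vsub b a) (vsub c a).

(* s is a (strictly) convex polygon with vertices listed counterclockwise:
   every vertex other than A_i, A_{i+1} lies strictly to the left of the
   directed edge A_i A_{i+1}. *)
Definition convex_ccw (s : seq pt) : Prop :=
  (3 <= size s)%N /\
  forall i j : nat, (i < size s)%N -> (j < size s)%N ->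
    j != i -> j != (i.+1 %% size s)%N ->
    0 < orient (vtx s i) (vtx s i.+1) (vtx s j).

Definition area (s : seq pt) : R :=
  `| 2^-1 * \sum_(k < size s) det2 (vtx s k) (vtx s k.+1) |.

Definition lerp (p q : pt) (t : R) : pt :=
  (p.1 + t * (q.1 - p.1), p.2 + t * (q.2 - p.2)).

(* Intersection point of the line through p1, p2 with the line through p3, p4
   (Cramer's rule; meaningful when the lines are not parallel). *)
Definition meet (p1 p2 p3 p4 : pt) : pt :=
  lerp p1 p2 (det2 (vsub p3 p1) (vsub p4 p3) / det2 (vsub p2 p1) (vsub p4 p3)).

Definition Bpt (r : R) (s : seq pt) (k : nat) : pt :=
  lerp (vtx s k.+1) (vtx s k.+2) r.

(* K_r : the n-gon bounded by the segments A_k B_k; its k-th vertex is the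
   intersection of the consecutive lines A_k B_k and A_{k+1} B_{k+1}. *)
Definition Kr (r : R) (s : seq pt) : seq pt :=
  mkseq (fun k => meet (vtx s k) (Bpt r s k) (vtx s k.+1) (Bpt r s k.+1)) (size s).

End Poly.

(* Let S and S_r be twice the areas of K and K_r, and P_k the vertex of K_r
   where the cevians A_k B_k and A_{k+1} B_{k+1} meet.  The points A_{k+1}, P_k,
   P_{k+1} are collinear, so S - S_r telescopes into the sum of the doubled
   areas of the triangles A_k A_{k+1} P_k.  Each of them lies in A_k A_{k+1} B_k,
   whose area is r times that of the ear A_k A_{k+1} A_{k+2}.  The ears have
   total doubled area 2 S - G with G = sum_k det(A_k, A_{k+2}), and G >= 0 for
   a convex polygon with at least four vertices: G vanishes for four points,
   and inserting a vertex adds a quantity that is nonnegative for any convex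
   pentagon.  Hence S - S_r <= 2 r S. *)

From HB Require Import structures.
From mathcomp Require Import all_boot all_order all_algebra.
From mathcomp Require Import ring lra zify.
Set Implicit Arguments. Unset Strict Implicit. Unset Printing Implicit Defensive.
Import Order.TTheory GRing.Theory Num.Theory.
Local Open Scope ring_scope.

Section PlaneGeometry.
Variable R : realFieldType.
Local Notation pt := (R * R)%type.
Implicit Types (a b c e p q s t u v w x y z : pt) (l : R).

Lemma orient_cycle a b c : orient a b c = orient b c a.
Proof. by rewrite /orient /det2 /vsub /=; ring. Qed.

Lemma orient_swap a b c : orient a c b = - orient a b c.
Proof. by rewrite /orient /det2 /vsub /=; ring. Qed.

Lemma orient_det2 a b c : orient a b c = det2 a b + det2 b c - det2 a c.
Proof. by rewrite /orient /det2 /vsub /=; ring. Qed.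

Lemma orient_lerp a b u v l :
  orient a b (lerp u v l) = (1 - l) * orient a b u + l * orient a b v.
Proof. by rewrite /orient /det2 /vsub /lerp /=; ring. Qed.

Lemma orient_lerp_left a b c l : orient a b (lerp a c l) = l * orient a b c.
Proof. by rewrite /orient /det2 /vsub /lerp /=; ring. Qed.

Lemma orient_lerp_right a b c l : orient a b (lerp b c l) = l * orient a b c.
Proof. by rewrite /orient /det2 /vsub /lerp /=; ring. Qed.

Lemma det2_plucker w x y z :
  det2 w y * det2 x z = det2 w x * det2 y z + det2 w z * det2 x y.
Proof. by rewrite /det2; ring. Qed.

(* Transitivity of the counterclockwise order of directions seen from a,
   inside the half-plane to the left of the ray from a towards e. *)
Lemma orient_trans a e y z w :
  0 < orient a e y -> 0 < orient a e z -> 0 < orient a e w ->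
  0 < orient a y z -> 0 < orient a z w -> 0 < orient a y w.
Proof.
move=> ey ez ew yz zw.
have := det2_plucker (vsub e a) (vsub y a) (vsub z a) (vsub w a).
rewrite -!/(orient _ _ _) => plucker.
have : 0 < orient a e z * orient a y w.
  by rewrite plucker addr_gt0 // mulr_gt0.
by rewrite pmulr_rgt0.
Qed.

Lemma orient_meet p1 p2 p3 p4 : det2 (vsub p2 p1) (vsub p4 p3) != 0 ->
  orient p3 p4 (meet p1 p2 p3 p4) = 0.
Proof. by move=> D0; rewrite /meet /orient /lerp /det2 /vsub /=; field. Qed.

Lemma orient_meet_chain p1 p2 p3 p4 p5 p6 : det2 (vsub p2 p1) (vsub p4 p3) != 0 ->
  orient p3 (meet p1 p2 p3 p4) (meet p3 p4 p5 p6) = 0.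
Proof.
by move=> D0; rewrite /(meet p3) orient_lerp_left orient_swap orient_meet ?oppr0 ?mulr0.
Qed.

Lemma orient_pentagon_ge0 p q x s t :
  0 < orient p q x -> 0 < orient p q s -> 0 < orient p x t ->
  0 < orient q x s -> 0 < orient q s t -> 0 < orient x s t ->
  0 <= orient p x s + orient q x t - orient q x s.
Proof.
move=> pqx pqs pxt qxs qst xst.
set L := _ - _; set D := det2 (vsub q p) (vsub t s).
have eL : L = orient p x t - D by rewrite /L /D /orient /det2 /vsub /=; ring.
have [D_le0|D_gt0] := lerP D 0; first by rewrite eL; lra.
have eAB : orient p q s * orient q s t * L = orient q s t ^+ 2 * orient p q x
    + orient p q s ^+ 2 * orient x s t
    + (orient p q s * orient q s t + D * (orient p q s + orient q s t)) * orient q x s.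
  by rewrite /L /D /orient /det2 /vsub /=; ring.
rewrite -(pmulr_rge0 _ (mulr_gt0 pqs qst)) eAB.
rewrite !addr_ge0 ?mulr_ge0 ?sqr_ge0 ?ltW //.
by apply: addr_gt0; apply: mulr_gt0 => //; apply: addr_gt0.
Qed.

End PlaneGeometry.

(* [meet a (lerp b c r) b (lerp c d r)] is [lerp a (lerp b c r) (num / den)]
   for the two determinants [num] and [den] compared below. *)
Section CevianMeet.
Variables (R : realFieldType) (a b c d : (R * R)%type) (r : R).
Hypotheses (r_gt0 : 0 < r) (r_lt1 : r < 1).
Hypotheses (abc : 0 < orient a b c) (abd : 0 < orient a b d) (bcd : 0 < orient b c d).

Lemma cevian_num_gt0 : 0 < det2 (vsub b a) (vsub (lerp c d r) b).
Proof.
have -> : det2 (vsub b a) (vsub (lerp c d r) b) = orient a b (lerp c d r).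
  by rewrite /orient /det2 /vsub /=; ring.
by rewrite orient_lerp; apply: addr_gt0; apply: mulr_gt0 => //; rewrite subr_gt0.
Qed.

Lemma cevian_num_lt_den : det2 (vsub b a) (vsub (lerp c d r) b)
  < det2 (vsub (lerp b c r) a) (vsub (lerp c d r) b).
Proof.
have -> : det2 (vsub (lerp b c r) a) (vsub (lerp c d r) b)
    = det2 (vsub b a) (vsub (lerp c d r) b) + r ^+ 2 * orient b c d.
  by rewrite /orient /det2 /vsub /lerp /=; ring.
by rewrite ltrDl mulr_gt0 ?exprn_gt0.
Qed.

Lemma cevian_den_gt0 : 0 < det2 (vsub (lerp b c r) a) (vsub (lerp c d r) b).
Proof. exact: lt_trans cevian_num_gt0 cevian_num_lt_den. Qed.

Lemma orient_cevian_meet_le :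
  orient a b (meet a (lerp b c r) b (lerp c d r)) <= r * orient a b c.
Proof.
rewrite /meet orient_lerp_left orient_lerp_right.
apply: ler_piMl; first by rewrite mulr_ge0 ?ltW.
by rewrite ler_pdivrMr ?cevian_den_gt0 // mul1r ltW ?cevian_num_lt_den.
Qed.

End CevianMeet.

Section ClosedPaths.
Variable R : realFieldType.
Implicit Types (f g : nat -> (R * R)%type) (m : nat).

Definition shoelace f m : R := \sum_(0 <= k < m) det2 (f k) (f k.+1).

Lemma area_shoelace (s : seq (R * R)) : area s = `|2^-1 * shoelace (vtx s) (size s)|.
Proof. by rewrite /area /shoelace big_mkord. Qed.

Lemma shoelace_sub f g m : f m = f 0 -> g m = g 0 ->
  shoelace f m - shoelace g m =
  \sum_(0 <= k < m) (orient (f k) (f k.+1) (g k) - orient (f k.+1) (g k) (g k.+1)).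
Proof.
move=> fm gm; rewrite /shoelace -sumrB.
have split_term k : det2 (f k) (f k.+1) - det2 (g k) (g k.+1) =
    orient (f k) (f k.+1) (g k) - orient (f k.+1) (g k) (g k.+1)
    + (det2 (g k.+1) (f k.+1) - det2 (g k) (f k)).
  by rewrite /orient /det2 /vsub /=; ring.
under eq_bigr do rewrite split_term.
by rewrite big_split /= telescope_sumr // fm gm subrr addr0.
Qed.

Lemma sum_orient_ears f m : f m = f 0 -> f m.+1 = f 1 ->
  \sum_(0 <= k < m) orient (f k) (f k.+1) (f k.+2)
  = 2 * shoelace f m - \sum_(0 <= k < m) det2 (f k) (f k.+2).
Proof.
move=> fm fm1; under eq_bigr do rewrite orient_det2.
rewrite sumrB big_split /=.
have shift : \sum_(0 <= k < m) det2 (f k.+1) (f k.+2) = shoelace f m.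
  apply/eqP; rewrite -subr_eq0 /shoelace -sumrB.
  by rewrite (telescope_sumr (fun k => det2 (f k) (f k.+1))) // fm fm1 subrr.
by rewrite shift -/(shoelace f m); ring.
Qed.

(* [skip_shoelace f m] is the sum over k < m of det2 (f k) (f (k + 2 mod m)),
   with the two wrap-around terms written out. *)
Definition skip_shoelace f m : R :=
  \sum_(0 <= k < m - 2) det2 (f k) (f k.+2)
  + det2 (f (m - 2)%N) (f 0) + det2 (f (m - 1)%N) (f 1).

Lemma skip_shoelace_periodic f m : (2 <= m)%N -> f m = f 0 -> f m.+1 = f 1 ->
  \sum_(0 <= k < m) det2 (f k) (f k.+2) = skip_shoelace f m.
Proof.
case: m => [|[|m]] // _ fm fm1; rewrite /skip_shoelace.
have -> : (m.+2 - 2 = m)%N by lia.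
have -> : (m.+2 - 1 = m.+1)%N by lia.
by rewrite !big_nat_recr //= fm fm1.
Qed.

Lemma skip_shoelace4 f : skip_shoelace f 4 = 0.
Proof. by rewrite /skip_shoelace !big_nat_recr //= big_geq //= /det2; ring. Qed.

Lemma skip_shoelaceS f m : (4 <= m)%N ->
  skip_shoelace f m.+1 = skip_shoelace f m
  + (orient (f (m - 2)%N) (f m) (f 0) + orient (f (m - 1)%N) (f m) (f 1)
     - orient (f (m - 1)%N) (f m) (f 0)).
Proof.
move=> m4; rewrite /skip_shoelace.
have -> : (m.+1 - 2 = (m - 2).+1)%N by lia.
have -> : (m.+1 - 1 = m)%N by lia.
rewrite big_nat_recr //=.
have -> : ((m - 2).+2 = m)%N by lia.
have -> : ((m - 2).+1 = m - 1)%N by lia.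
rewrite !orient_det2; ring.
Qed.

End ClosedPaths.

Definition cevian_meet (R : realFieldType) (r : R) (s : seq (R * R)) (k : nat) :=
  meet (vtx s k) (Bpt r s k) (vtx s k.+1) (Bpt r s k.+1).

Section ConvexPolygon.
Variables (R : realFieldType) (s : seq (R * R)).
Local Notation n := (size s).
Local Notation A := (vtx s).

Lemma vtx_mod k : A (k %% n) = A k.
Proof. by rewrite /vtx modn_mod. Qed.

Lemma vtx_modD k j : A (k %% n + j) = A (k + j).
Proof. by rewrite /vtx modnDml. Qed.

Lemma vtx_size : A n = A 0.
Proof. by rewrite /vtx modnn mod0n. Qed.

Lemma vtx_sizeS : A n.+1 = A 1.
Proof. by rewrite /vtx -[n.+1]addn1 modnDl. Qed.

Lemma cevian_meet_mod r k : cevian_meet r s (k %% n) = cevian_meet r s k.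
Proof.
rewrite /cevian_meet /Bpt -[(k %% n).+3]addn3 -[(k %% n).+2]addn2 -[(k %% n).+1]addn1.
by rewrite !vtx_modD vtx_mod addn1 addn2 addn3.
Qed.

Lemma area_Kr r : (0 < n)%N -> area (Kr r s) = `|2^-1 * shoelace (cevian_meet r s) n|.
Proof.
move=> n_gt0; have vtx_Kr k : vtx (Kr r s) k = cevian_meet r s k.
  by rewrite /vtx /Kr size_mkseq nth_mkseq ?ltn_pmod //; exact: cevian_meet_mod.
by rewrite area_shoelace size_mkseq /shoelace; under eq_bigr do rewrite !vtx_Kr.
Qed.

Hypothesis convex : convex_ccw s.

Lemma convex_left_of_edge k i j : (i.+1 < n)%N -> (j < n)%N -> j != i -> j != i.+1 ->
  0 < orient (A (k + i)) (A (k + i).+1) (A (k + j)).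
Proof.
move=> i1n jn ji ji1; case: convex => n3 edge.
have n_gt0 : (0 < n)%N by lia.
have := edge ((k + i) %% n)%N ((k + j) %% n)%N (ltn_pmod _ n_gt0) (ltn_pmod _ n_gt0).
have vtx_modS m : A (m %% n).+1 = A m.+1.
  by rewrite -[(m %% n).+1]addn1 vtx_modD addn1.
rewrite vtx_modS !vtx_mod; apply.
  by rewrite eqn_modDl !modn_small //; lia.
by rewrite -[((k + i) %% n).+1]addn1 modnDml addn1 -addnS eqn_modDl !modn_small.
Qed.

Lemma convex_orient_gt0 k x y z : (x < y < z)%N -> (z < n)%N ->
  0 < orient (A (k + x)) (A (k + y)) (A (k + z)).
Proof.
move=> /andP[xy yz] zn.
have edge i j : (i.+1 < n)%N -> (j < n)%N -> j != i -> j != i.+1 ->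
    0 < orient (A (k + i)) (A (k + i.+1)) (A (k + j)).
  by rewrite addnS; exact: convex_left_of_edge.
have [->|y_ne] := eqVneq y x.+1; first by apply: edge; lia.
elim: z yz zn => [//|z IH] yz zn.
have [<-|yz'] := eqVneq y z; first by rewrite orient_cycle; apply: edge; lia.
apply: (@orient_trans _ _ (A (k + x.+1)) _ (A (k + z))); try by apply: edge; lia.
  by apply: IH; lia.
by rewrite orient_cycle; apply: edge; lia.
Qed.

Lemma convex_quad_orient k : (4 <= n)%N ->
  [/\ 0 < orient (A k) (A k.+1) (A k.+2), 0 < orient (A k) (A k.+1) (A k.+3)
    & 0 < orient (A k.+1) (A k.+2) (A k.+3)].
Proof.
move=> n4; split.
- by have := @convex_orient_gt0 k 0 1 2; rewrite addn0 addn1 addn2; apply=> //; lia.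
- by have := @convex_orient_gt0 k 0 1 3; rewrite addn0 addn1 addn3; apply=> //; lia.
- by have := @convex_orient_gt0 k 1 2 3; rewrite addn1 addn2 addn3; apply=> //; lia.
Qed.

Section Cevians.
Variable r : R.
Hypotheses (n4 : (4 <= n)%N) (r_gt0 : 0 < r) (r_lt1 : r < 1).

Lemma orient_vtx_cevian_meet_le k :
  orient (A k) (A k.+1) (cevian_meet r s k) <= r * orient (A k) (A k.+1) (A k.+2).
Proof. by have [abc abd bcd] := convex_quad_orient k n4; exact: orient_cevian_meet_le. Qed.

Lemma cevian_meet_collinear k :
  orient (A k.+1) (cevian_meet r s k) (cevian_meet r s k.+1) = 0.
Proof.
have [abc abd bcd] := convex_quad_orient k n4.
by apply: orient_meet_chain; rewrite lt0r_neq0 ?cevian_den_gt0.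
Qed.

Lemma shoelace_sub_cevian_le :
  shoelace A n - shoelace (cevian_meet r s) n
  <= r * \sum_(0 <= k < n) orient (A k) (A k.+1) (A k.+2).
Proof.
have cevian_meet_size : cevian_meet r s n = cevian_meet r s 0.
  by rewrite -cevian_meet_mod modnn.
rewrite shoelace_sub ?vtx_size // mulr_sumr; apply: ler_sum => k _.
by rewrite cevian_meet_collinear subr0 orient_vtx_cevian_meet_le.
Qed.

End Cevians.

Lemma skip_shoelace_ge0 m : (4 <= m <= n)%N -> 0 <= skip_shoelace A m.
Proof.
have o x y z : (x < y < z)%N -> (z < n)%N -> 0 < orient (A x) (A y) (A z).
  by have := @convex_orient_gt0 0 x y z; rewrite !add0n.
elim: m => [//|m IH] /andP[m4 mn].
have [m3|m4'] := leqP m 3.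
  by rewrite (_ : m.+1 = 4)%N ?skip_shoelace4 //; lia.
rewrite skip_shoelaceS //; apply: addr_ge0; first by apply: IH; lia.
apply: orient_pentagon_ge0;
  [| rewrite -orient_cycle | rewrite -orient_cycle | rewrite -orient_cycle
   | rewrite orient_cycle | rewrite orient_cycle]; by apply: o; lia.
Qed.

Lemma sum_skip_det2_ge0 : (4 <= n)%N -> 0 <= \sum_(0 <= k < n) det2 (A k) (A k.+2).
Proof.
move=> n4; rewrite skip_shoelace_periodic ?vtx_size ?vtx_sizeS //; last by lia.
by apply: skip_shoelace_ge0; rewrite n4 leqnn.
Qed.

Lemma shoelace_gt0 : (4 <= n)%N -> 0 < shoelace A n.
Proof.
move=> n4; have ears := sum_orient_ears vtx_size vtx_sizeS.
have ears_gt0 : 0 < \sum_(0 <= k < n) orient (A k) (A k.+1) (A k.+2).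
  rewrite -(subnK (ltnW n4)) addn3 big_nat_recl //.
  have [ear0 _ _] := convex_quad_orient 0 n4.
  by rewrite ltr_pwDl // sumr_ge0 // => k _; have [/ltW] := convex_quad_orient k.+1 n4.
have := sum_skip_det2_ge0 n4; lra.
Qed.

Lemma shoelace_cevian_ge r : (4 <= n)%N -> 0 < r -> r < 1 ->
  (1 - 2 * r) * shoelace A n <= shoelace (cevian_meet r s) n.
Proof.
move=> n4 r_gt0 r_lt1.
have := shoelace_sub_cevian_le n4 r_gt0 r_lt1.
rewrite sum_orient_ears ?vtx_size ?vtx_sizeS //.
have := mulr_ge0 (ltW r_gt0) (sum_skip_det2_ge0 n4); nra.
Qed.

End ConvexPolygon.

Theorem theorem5p1 (R : realFieldType) (s : seq (R * R)) (r : R) :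
  (5 <= size s)%N -> 0 < r -> r < 2^-1 -> convex_ccw s ->
  1 - 2 * r <= area (Kr r s) / area s.
Proof.
move=> n5 r_gt0 r_lt_half convex.
have n4 : (4 <= size s)%N by lia.
have r_lt1 : r < 1 by lra.
have S_gt0 := shoelace_gt0 convex n4.
have area_s : area s = 2^-1 * shoelace (vtx s) (size s).
  by rewrite area_shoelace ger0_norm // mulr_ge0 ?invr_ge0 ?ler0n // ltW.
rewrite area_s ler_pdivlMr; last by rewrite mulr_gt0 ?invr_gt0 ?ltr0n.
rewrite area_Kr; last by lia.
apply: le_trans (ler_norm _).
by rewrite mulrCA ler_pM2l ?invr_gt0 ?ltr0n ?shoelace_cevian_ge.
Qed.
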